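(* Let $d\ge2$, let $\mathfrak{F}$ be a field or an ordered field with universe $F$, and let $\mathcal{L}$ be the language of $\mathfrak{F}$ (the language of fields, resp. of ordered fields). Let $\Delta$ be a finite subset of $\mathcal{R}Symb_{\mathcal{L}}$ such that $\mathcal{G}_\Delta(\mathfrak{F})$ is a coordinate geometry over $\mathfrak{F}$, and let $R\in\mathcal{R}Symb_{\mathcal{L}}$. Then $\mathfrak{F}\models\forall\hat e_0\dots\forall\hat e_d\,(\theta_\Delta(\hat e_0,\dots,\hat e_d)\rightarrow\theta_R(\hat e_0,\dots,\hat e_d))$ if and only if every affine automorphism of $\mathcal{G}_\Delta(\mathfrak{F})$ is an affine automorphism of $\mathcal{G}_{\Delta\cup\{R\}}(\mathfrak{F})$.
   Context: Fix variables $v_1,v_2,\dots$. $\mathcal{R}Symb_{\mathcal{L}}$ is the set of pairs $\langle\varrho,n\rangle$ with $n\ge1$ and $\varrho$ an $\mathcal{L}$-formula whose free variables are among $v_1,\dots,v_{dn}$. For $R=\langle\varrho,n\rangle$, define the $n$-ary relation $R_{\mathfrak{F}d}$ on $F^d$ by $(\vec p_1,\dots,\vec p_n)\in R_{\mathfrak{F}d}$ iff $\mathfrak{F}\models\varrho[p_{11},\dots,p_{1d},\dots,p_{n1},\dots,p_{nd}]$, where $\vec p_i=\langle p_{i1},\dots,p_{id}\rangle$. For $\Delta\subseteq\mathcal{R}Symb_{\mathcal{L}}$, $\mathcal{G}_\Delta(\mathfrak{F})$ is the model with universe $F^d$ having, for each $R=\langle\varrho,n\rangle\in\Delta$, an $n$-ary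 relation symbol interpreted as $R_{\mathfrak{F}d}$. A coordinate geometry over a field (resp. ordered field) $\mathfrak{F}$ is a model with universe $F^d$, only relation symbols, in which (parameter-free) ${\mathsf{Col}}$ (resp. ${\mathsf{Bw}}$) is first-order definable, where ${\mathsf{Col}}(\vec p,\vec q,\vec r)$ iff $\vec q=\vec p+\lambda(\vec r-\vec p)$ for some $\lambda\in F$ or $\vec r=\vec p$, and ${\mathsf{Bw}}(\vec p,\vec q,\vec r)$ iff $\vec q=\vec p+\lambda(\vec r-\vec p)$ for some $\lambda\in[0,1]$. An affine transformation of $F^d$ is an invertible linear map followed by a translation; an affine automorphism of a model with universe $F^d$ is an automorphism that is an affine transformation. Formulas: $\hat x$ denotes a block of $d$ variables $x_1,\dots,x_d$ viewed as a vector $\vec x$. $\iota(\hat e_0,\dots,\hat e_d)$ is $\forall\lambda_1\dots\forall\lambda_d(\sum_{i=1}^d\lambda_i(\vec e_i-\vec e_0)=\vec 0\rightarrow\bigwedge_{i=1}^d\lambda_i=0)$. $\theta(\hat e_0,\dots,\hat e_d,\hat x,\hat y)$ is $\vec y=\vec e_0+\sum_{i=1}^d x_i(\vec e_i-\vec e_0)$ (componentwise). For $R=\langle\varrho,n\rangle$, $\theta_R(\hat e_0,\dots,\hat e_d)$ is $\iota(\hat e_0,\dots,\hat e_d)\wedge\forall\hat x_1\dots\forall\hat x_n\forall\hat y_1\dots\forall\hat y_n\big((\bigwedge_{i=1}^n\theta(\hat e_0,\dots,\hat e_d,\hat x_i,\hat y_i))\rightarrow(\varrho(\hat x_1,\dots,\hat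 x_n)\leftrightarrow\varrho(\hat y_1,\dots,\hat y_n))\big)$, where $\varrho(\hat x_1,\dots,\hat x_n)$ means $\varrho$ with $v_1,\dots,v_{dn}$ replaced by the components of $\hat x_1,\dots,\hat x_n$ in order. For finite $\Delta$, $\theta_\Delta=\bigwedge_{R\in\Delta}\theta_R$. *)

From Stdlib Require List.
From HB Require Import structures.
From mathcomp Require Import all_boot all_order all_algebra.
Set Implicit Arguments. Unset Strict Implicit. Unset Printing Implicit Defensive.
Import Order.TTheory GRing.Theory Num.Theory.
Local Open Scope ring_scope.

(* Variables are v_k, k : nat (the paper uses v_1, v_2, ...). *)
Inductive fterm : Type :=
  | TVar of nat | TZero | TOne
  | TAdd of fterm & fterm | TMul of fterm & fterm | TOpp of fterm.

Inductive fform : Type :=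
  | FEq of fterm & fterm
  | FLe of fterm & fterm
  | FFalse
  | FNot of fform | FAnd of fform & fform | FOr of fform & fform
  | FImp of fform & fform
  | FAll of nat & fform | FEx of nat & fform.

Inductive lang := LField | LOrdField.

Fixpoint le_free (f : fform) : bool :=
  match f with
  | FLe _ _ => false
  | FEq _ _ | FFalse => true
  | FNot g | FAll _ g | FEx _ g => le_free g
  | FAnd g h | FOr g h | FImp g h => le_free g && le_free h
  end.

Definition in_lang (L : lang) (f : fform) : bool :=
  if L is LField then le_free f else true.

Fixpoint fv_term (t : fterm) : seq nat :=
  match t with
  | TVar k => [:: k]
  | TZero | TOne => [::]
  | TAdd s u | TMul s u => fv_term s ++ fv_term u
  | TOpp s => fv_term s
  end.

Fixpoint fv_form (f : fform) : seq nat :=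
  match f with
  | FEq s t | FLe s t => fv_term s ++ fv_term t
  | FFalse => [::]
  | FNot g => fv_form g
  | FAnd g h | FOr g h | FImp g h => fv_form g ++ fv_form h
  | FAll k g | FEx k g => [seq j <- fv_form g | j != k]
  end.

Definition upd {T : Type} (v : nat -> T) (k : nat) (a : T) : nat -> T :=
  fun j => if j == k then a else v j.

Section FieldSemantics.
Variables (F : fieldType) (le : F -> F -> Prop).

Fixpoint tval (v : nat -> F) (t : fterm) : F :=
  match t with
  | TVar k => v k
  | TZero => 0
  | TOne => 1
  | TAdd s u => tval v s + tval v u
  | TMul s u => tval v s * tval v u
  | TOpp s => - tval v s
  end.

Fixpoint fsat (v : nat -> F) (f : fform) : Prop :=
  match f with
  | FEq s t => tval v s = tval v t
  | FLe s t => le (tval v s) (tval v t)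
  | FFalse => False
  | FNot g => ~ fsat v g
  | FAnd g h => fsat v g /\ fsat v h
  | FOr g h => fsat v g \/ fsat v h
  | FImp g h => fsat v g -> fsat v h
  | FAll k g => forall a : F, fsat (upd v k a) g
  | FEx k g => exists a : F, fsat (upd v k a) g
  end.
End FieldSemantics.

Record rsym := RSym { rs_form : fform; rs_ar : nat }.

Definition valid_rsym (L : lang) (d : nat) (R : rsym) : bool :=
  [&& in_lang L (rs_form R), (0 < rs_ar R)%N &
      all (fun k => (1 <= k <= d * rs_ar R)%N) (fv_form (rs_form R))].

Section Geometry.
Variables (F : fieldType) (le : F -> F -> Prop) (d : nat).

Notation point := 'rV[F]_d.

(* valuation v_{(i-1)d + j} := p_{ij}  (1-indexed i,j), i.e. v_{k'+1} is
   coordinate (k' %% d) of point (k' %/ d), both 0-indexed *)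
Definition val_of (n : nat) (ps : 'I_n -> point) (k : nat) : F :=
  match k with
  | 0 => 0
  | k'.+1 =>
      match insub (k' %/ d)%N, insub (k' %% d)%N with
      | Some i, Some j => ps i 0 j
      | _, _ => 0
      end
  end.

Definition relF (R : rsym) (ps : 'I_(rs_ar R) -> point) : Prop :=
  fsat le (val_of ps) (rs_form R).

(* GRel k args : the k-th symbol of Delta applied to the variables args *)
Inductive gform : Type :=
  | GEq of nat & nat
  | GRel of nat & seq nat
  | GFalse
  | GNot of gform | GAnd of gform & gform | GOr of gform & gform
  | GImp of gform & gform
  | GAll of nat & gform | GEx of nat & gform.

Fixpoint gsat (Delta : seq rsym) (v : nat -> point) (f : gform) : Prop :=
  match f with
  | GEq i j => v i = v j
  | GRel k args =>
      match List.nth_error Delta k with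
      | Some R => size args = rs_ar R /\
                  relF (fun i : 'I_(rs_ar R) => v (nth 0%N args i))
      | None => False
      end
  | GFalse => False
  | GNot g => ~ gsat Delta v g
  | GAnd g h => gsat Delta v g /\ gsat Delta v h
  | GOr g h => gsat Delta v g \/ gsat Delta v h
  | GImp g h => gsat Delta v g -> gsat Delta v h
  | GAll k g => forall a : point, gsat Delta (upd v k a) g
  | GEx k g => exists a : point, gsat Delta (upd v k a) g
  end.

Definition fo_definable3 (Delta : seq rsym) (B : point -> point -> point -> Prop) :=
  exists phi : gform, forall v : nat -> point,
      B (v 0%N) (v 1%N) (v 2%N) <-> gsat Delta v phi.

Definition Col (p q r : point) : Prop :=
  (exists lam : F, q = p + lam *: (r - p)) \/ r = p.

Definition is_affine (f : point -> point) : Prop :=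
  exists (M : 'M[F]_d) (b : point), M \in unitmx /\ forall x, f x = x *m M + b.

Definition is_aut (Delta : seq rsym) (f : point -> point) : Prop :=
  bijective f /\
  forall R, List.In R Delta ->
    forall ps : 'I_(rs_ar R) -> point, relF ps <-> relF (f \o ps).

Definition affine_aut (Delta : seq rsym) (f : point -> point) : Prop :=
  is_affine f /\ is_aut Delta f.

Definition iota (e : 'I_d.+1 -> point) : Prop :=
  forall lam : 'I_d -> F,
    \sum_(i < d) lam i *: (e (lift ord0 i) - e ord0) = 0 -> forall i, lam i = 0.

Definition theta (e : 'I_d.+1 -> point) (x y : point) : Prop :=
  y = e ord0 + \sum_(i < d) x 0 i *: (e (lift ord0 i) - e ord0).

Definition theta_R (R : rsym) (e : 'I_d.+1 -> point) : Prop :=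
  iota e /\
  forall xs ys : 'I_(rs_ar R) -> point,
    (forall i, theta e (xs i) (ys i)) -> (relF xs <-> relF ys).

(* theta_Delta = conjunction of the theta_R, R in Delta (the conjunct iota
   is added explicitly; it is already implied when Delta is non-empty) *)
Definition theta_Delta (Delta : seq rsym) (e : 'I_d.+1 -> point) : Prop :=
  iota e /\ forall R, List.In R Delta -> theta_R R e.

End Geometry.

Definition Bw (F : realFieldType) (d : nat) (p q r : 'rV[F]_d) : Prop :=
  exists lam : F, 0 <= lam <= 1 /\ q = p + lam *: (r - p).

(* interpretation of <= : irrelevant for le-free formulas *)
Definition no_le (F : fieldType) : F -> F -> Prop := fun _ _ => False.
Definition real_le (F : realFieldType) : F -> F -> Prop := fun x y => x <= y.

(* A frame e_0, ..., e_d satisfying iota is the same thing as an invertible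
   affine map, namely x |-> e_0 + sum_i x_i (e_i - e_0), and theta(e, x, y)
   says that y is the image of x under that map.  Hence theta_R(e) says
   exactly that the affine map of e preserves R, theta_Delta(e) that it is an
   automorphism of G_Delta, and conversely every affine automorphism arises
   from the frame formed by the image of the standard frame. *)
From Pilot Require Import Defs.
From HB Require Import structures.
From mathcomp Require Import all_boot all_order all_algebra.
From Stdlib Require Import FunctionalExtensionality.
Set Implicit Arguments. Unset Strict Implicit. Unset Printing Implicit Defensive.
Import Order.TTheory GRing.Theory Num.Theory.
Local Open Scope ring_scope.

Section Frames.
Variables (F : fieldType) (le : F -> F -> Prop) (d : nat).

Notation point := 'rV[F]_d.
Notation frame := ('I_d.+1 -> point).

Definition frame_mx (e : frame) : 'M[F]_d :=
  \matrix_(i < d) (e (lift ord0 i) - e ord0).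

Definition frame_map (e : frame) (x : point) : point := x *m frame_mx e + e ord0.

Lemma frame_mx_sum (e : frame) (x : point) :
  \sum_(i < d) x 0 i *: (e (lift ord0 i) - e ord0) = x *m frame_mx e.
Proof. by rewrite mulmx_sum_row; apply: eq_bigr => i _; rewrite rowK. Qed.

Lemma theta_frame_map (e : frame) (x y : point) :
  theta e x y <-> y = frame_map e x.
Proof. by rewrite /theta /frame_map frame_mx_sum addrC. Qed.

Lemma iota_unitmx (e : frame) : Defs.iota e <-> frame_mx e \in unitmx.
Proof.
split=> [iota_e | U lam].
- rewrite unitmxE unitfE; apply/negP => /det0P [v /negP v_neq0 vM0].
  apply: v_neq0; apply/eqP/rowP => j; rewrite mxE.
  by apply: (iota_e (v 0)); rewrite frame_mx_sum.
- have -> : \sum_(i < d) lam i *: (e (lift ord0 i) - e ord0)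
          = \sum_(i < d) (\row_j lam j) 0 i *: (e (lift ord0 i) - e ord0).
    by apply: eq_bigr => i _; rewrite mxE.
  rewrite frame_mx_sum => lamM0 i.
  have /rowP/(_ i) : \row_j lam j = 0.
    by rewrite -(mulmxK U (\row_j lam j)) lamM0 mul0mx.
  by rewrite !mxE.
Qed.

Lemma affine_bijective (M : 'M[F]_d) (b : point) :
  M \in unitmx -> bijective (fun x => x *m M + b).
Proof.
move=> U; exists (fun y => (y - b) *m invmx M) => x.
  by rewrite addrK mulmxK.
by rewrite mulmxKV // subrK.
Qed.

Lemma frame_map_affine (e : frame) : Defs.iota e -> is_affine (frame_map e).
Proof. by move/iota_unitmx=> U; exists (frame_mx e), (e ord0). Qed.

Lemma theta_R_frame_map (R : rsym) (e : frame) :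
  theta_R le R e <->
  Defs.iota e /\
  forall ps : 'I_(rs_ar R) -> point, relF le ps <-> relF le (frame_map e \o ps).
Proof.
split=> -[iota_e Re]; split=> // xs.
- by apply: Re => i; apply/theta_frame_map.
- move=> ys xys; have -> // : ys = frame_map e \o xs.
  by apply: functional_extensionality => i; apply/theta_frame_map.
Qed.

Lemma theta_Delta_is_aut (Delta : seq rsym) (e : frame) :
  Defs.iota e -> theta_Delta le Delta e <-> is_aut le Delta (frame_map e).
Proof.
move=> iota_e; split=> [[_ De] | [_ De]].
- split; first exact/affine_bijective/iota_unitmx.
  by move=> R inR; have /theta_R_frame_map[] := De R inR.
- by split=> // R inR; apply/theta_R_frame_map; split=> //; apply: De.
Qed.

Definition affine_frame (M : 'M[F]_d) (b : point) : frame :=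
  fun k => (if unlift ord0 k is Some i then row i M else 0) + b.

Lemma affine_frame_mx (M : 'M[F]_d) (b : point) : frame_mx (affine_frame M b) = M.
Proof.
apply/row_matrixP => i.
by rewrite rowK /affine_frame liftK unlift_none add0r addrK.
Qed.

Lemma is_affine_frame_map (f : point -> point) :
  is_affine f -> exists2 e : frame, Defs.iota e & f = frame_map e.
Proof.
move=> [M [b [U fE]]]; exists (affine_frame M b).
  by apply/iota_unitmx; rewrite affine_frame_mx.
apply: functional_extensionality => x.
by rewrite fE /frame_map affine_frame_mx /affine_frame unlift_none add0r.
Qed.

Lemma theta_Delta_theta_R_iff_affine_aut (Delta : seq rsym) (R : rsym) :
  (forall e : frame, theta_Delta le Delta e -> theta_R le R e) <->
  (forall f : point -> point, affine_aut le Delta f -> affine_aut le (R :: Delta) f).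
Proof.
split=> [thetaDR f [f_aff [f_bij Df]] | autDR e [iota_e De]].
- have [e iota_e fE] := is_affine_frame_map f_aff.
  have /thetaDR/theta_R_frame_map[_ Rf] : theta_Delta le Delta e.
    by apply/theta_Delta_is_aut; rewrite -?fE.
  by split=> //; split=> // R' [<- | /Df]; rewrite ?fE.
- have Daut : is_aut le Delta (frame_map e) by apply/theta_Delta_is_aut.
  have [_ [_ RDe]] := autDR _ (conj (frame_map_affine iota_e) Daut).
  by apply/theta_R_frame_map; split=> //; apply: RDe; left.
Qed.

End Frames.

Theorem lemma5 :
  (* case 1: F a field, L the language of fields *)
  (forall (F : fieldType) (d : nat) (Delta : seq rsym) (R : rsym),
      (2 <= d)%N ->
      all (valid_rsym LField d) Delta ->
      valid_rsym LField d R ->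
      fo_definable3 (@no_le F) Delta (@Col F d) ->
      ((forall e : 'I_d.+1 -> 'rV[F]_d,
          theta_Delta (@no_le F) Delta e -> theta_R (@no_le F) R e)
       <->
       (forall f : 'rV[F]_d -> 'rV[F]_d,
          affine_aut (@no_le F) Delta f -> affine_aut (@no_le F) (R :: Delta) f)))
  /\
  (* case 2: F an ordered field, L the language of ordered fields *)
  (forall (F : realFieldType) (d : nat) (Delta : seq rsym) (R : rsym),
      (2 <= d)%N ->
      all (valid_rsym LOrdField d) Delta ->
      valid_rsym LOrdField d R ->
      fo_definable3 (@real_le F) Delta (@Bw F d) ->
      ((forall e : 'I_d.+1 -> 'rV[F]_d,
          theta_Delta (@real_le F) Delta e -> theta_R (@real_le F) R e)
       <->
       (forall f : 'rV[F]_d -> 'rV[F]_d,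
          affine_aut (@real_le F) Delta f -> affine_aut (@real_le F) (R :: Delta) f))).
Proof.
by split=> F d Delta R _ _ _ _; apply: theta_Delta_theta_R_iff_affine_aut.
Qed.
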